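(* Let $A,B$ be mutually avoiding point sets with $A\cup B$ in general position, let $x_1\prec x_2\prec\cdots\prec x_n$ be points of $A$ and $y_1\prec y_2\prec\cdots\prec y_n$ be points of $B$. Then the straight-line drawing of the ladder graph formed by the paths $x_1x_2\cdots x_n$ and $y_1y_2\cdots y_n$ and the edges $x_iy_i$, $i\in[n]$, is non-crossing.
   Context: Two finite point sets $A,B\subset\mathbb{R}^2$ are mutually avoiding if $|A|,|B|\ge2$, no line through two points of $A$ intersects the convex hull of $B$, and no line through two points of $B$ intersects the convex hull of $A$. For such a pair there are unique total orders $\prec$ on $A$ and on $B$ such that every point of $B$ sees the points of $A$ consecutively in clockwise order according to $\prec$, and every point of $A$ sees the points of $B$ consecutively in counterclockwise order according to $\prec$. Non-crossing means no two edge segments share a point other than a common endpoint. *)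

From HB Require Import structures.
From mathcomp Require Import all_boot all_order all_algebra.
Set Implicit Arguments. Unset Strict Implicit. Unset Printing Implicit Defensive.
Import Order.TTheory GRing.Theory Num.Theory.
Local Open Scope ring_scope.

Section Geo.
Variable R : realFieldType.
Definition pt := (R * R)%type.

(* orientation determinant: > 0 iff p,q,r counterclockwise, < 0 iff clockwise *)
Definition orient (p q r : pt) : R :=
  (q.1 - p.1) * (r.2 - p.2) - (q.2 - p.2) * (r.1 - p.1).

Definition on_line (p q z : pt) : Prop := orient p q z = 0.

Definition in_hull (s : seq pt) (z : pt) : Prop :=
  exists w : pt -> R,
    (forall p, 0 <= w p) /\
    \sum_(p <- undup s) w p = 1 /\
    z = (\sum_(p <- undup s) w p * p.1, \sum_(p <- undup s) w p * p.2).

Definition lines_avoid_hull (A B : seq pt) : Prop :=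
  forall a1 a2, a1 \in A -> a2 \in A -> a1 != a2 ->
  forall z, on_line a1 a2 z -> ~ in_hull B z.

Definition mutually_avoiding (A B : seq pt) : Prop :=
  (2 <= size (undup A))%N /\ (2 <= size (undup B))%N /\
  lines_avoid_hull A B /\ lines_avoid_hull B A.

Definition general_position (S : seq pt) : Prop :=
  forall p q r, p \in S -> q \in S -> r \in S ->
  p != q -> q != r -> p != r -> orient p q r != 0.

Definition strict_total_order_on (A : seq pt) (prec : pt -> pt -> bool) : Prop :=
  (forall a, a \in A -> ~~ prec a a) /\
  (forall a b c, a \in A -> b \in A -> c \in A -> prec a b -> prec b c -> prec a c) /\
  (forall a b, a \in A -> b \in A -> a != b -> prec a b || prec b a).

Definition sees_cw (b : pt) (A : seq pt) (prec : pt -> pt -> bool) : Prop :=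
  forall a a', a \in A -> a' \in A -> prec a a' -> orient b a a' < 0.

Definition sees_ccw (a : pt) (B : seq pt) (prec : pt -> pt -> bool) : Prop :=
  forall b b', b \in B -> b' \in B -> prec b b' -> 0 < orient a b b'.

Definition avoiding_orders (A B : seq pt) (precA precB : pt -> pt -> bool) : Prop :=
  strict_total_order_on A precA /\ strict_total_order_on B precB /\
  (forall b, b \in B -> sees_cw b A precA) /\
  (forall a, a \in A -> sees_ccw a B precB).

Definition in_seg (p q z : pt) : Prop :=
  exists t : R, 0 <= t /\ t <= 1 /\
    z = ((1 - t) * p.1 + t * q.1, (1 - t) * p.2 + t * q.2).

Definition non_crossing (E : seq (pt * pt)) : Prop :=
  forall e f, e \in E -> f \in E ->
    (e != f /\ e != (f.2, f.1)) ->
    forall z, in_seg e.1 e.2 z -> in_seg f.1 f.2 z ->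
      (z \in [:: e.1; e.2]) && (z \in [:: f.1; f.2]).

Definition ladder_edges (n : nat) (x y : nat -> pt) : seq (pt * pt) :=
  [seq (x i, x i.+1) | i <- iota 0 n.-1] ++
  [seq (y i, y i.+1) | i <- iota 0 n.-1] ++
  [seq (x i, y i) | i <- iota 0 n].
End Geo.

From HB Require Import structures.
From mathcomp Require Import all_boot all_order all_algebra.
From mathcomp Require Import ring lra zify.
Import Order.TTheory GRing.Theory Num.Theory.
Set Implicit Arguments. Unset Strict Implicit.
Local Open Scope ring_scope.

(* Every pair of ladder edges is shown to meet at most in a
   common endpoint by exhibiting a line that separates them, or that
   separates them except for a single shared vertex.  Along a segment the
   orientation with respect to a fixed line is an affine function, which
   gives two geometric facts: segments lying in opposite (one closed, one
   open) half-planes are disjoint, and a segment with one endpoint on the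
   line and the other strictly on one side meets the opposite closed
   half-plane only in that endpoint.
   The order hypotheses are used only through their consequence that each
   y_j sees x_1, ..., x_n clockwise and each x_j sees y_1, ..., y_n
   counterclockwise.  From this: the line through y_j and x_(i+1) separates
   x_i from the later x_k (so the x-path is simple, and likewise the
   y-path); the line through a rung x_i y_i has all earlier vertices on one
   side and all later ones on the other (so rungs are disjoint and a rung
   meets a path edge only at x_i or y_i); and the line through an edge of
   the x-path has all of y on one side.  The theorem then follows by a case
   analysis on the kinds of the two edges. *)

Definition meets_at_endpoints (R : realFieldType) (e f : pt R * pt R) : Prop :=
  forall z, in_seg e.1 e.2 z -> in_seg f.1 f.2 z ->
    (z \in [:: e.1; e.2]) && (z \in [:: f.1; f.2]).

Lemma meets_at_endpoints_sym (R : realFieldType) (e f : pt R * pt R) :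
  meets_at_endpoints e f -> meets_at_endpoints f e.
Proof. by move=> mef z zf ze; rewrite andbC; apply: mef. Qed.

Section Orientation.
Variable R : realFieldType.
Implicit Types c d p q r z : pt R.

Lemma orient_cycle p q r : orient p q r = orient q r p.
Proof. rewrite /orient; ring. Qed.

Lemma orient_swap12 p q r : orient p q r = - orient q p r.
Proof. rewrite /orient; ring. Qed.

Lemma orient_swap23 p q r : orient p q r = - orient p r q.
Proof. rewrite /orient; ring. Qed.

Lemma orient_on_line c d p : p \in [:: c; d] -> orient c d p = 0.
Proof. by rewrite !inE => /orP[] /eqP ->; rewrite /orient; ring. Qed.

Lemma in_seg_sym p q z : in_seg p q z -> in_seg q p z.
Proof.
move=> [t [t0 [t1 ->]]]; exists (1 - t); split; [lra | split; [lra | congr (_, _); ring]].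
Qed.

Lemma orient_along_seg c d p q z : in_seg p q z -> exists t,
  [/\ 0 <= t <= 1, orient c d z = (1 - t) * orient c d p + t * orient c d q
    & t = 0 -> z = p].
Proof.
move=> [t [t0 [t1 ->]]]; exists t; split; first by rewrite t0 t1.
  by rewrite /orient /=; ring.
by move->; rewrite subr0 !mul1r !mul0r !addr0; case: p.
Qed.

Lemma seg_on_line p q z : in_seg p q z -> orient p q z = 0.
Proof.
move=> /(orient_along_seg p q) [t [_ -> _]].
by rewrite !orient_on_line ?inE ?eqxx ?orbT //; ring.
Qed.

Lemma seg_orient_le0 c d p q z : in_seg p q z ->
  orient c d p <= 0 -> orient c d q <= 0 -> orient c d z <= 0.
Proof. by move=> /(orient_along_seg c d) [t [/andP[t0 t1] -> _]]; nra. Qed.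

Lemma seg_orient_gt0 c d p q z : in_seg p q z ->
  0 < orient c d p -> 0 < orient c d q -> 0 < orient c d z.
Proof. by move=> /(orient_along_seg c d) [t [/andP[t0 t1] -> _]]; nra. Qed.

Lemma segments_separated c d p q p' q' z :
  orient c d p <= 0 -> orient c d q <= 0 ->
  0 < orient c d p' -> 0 < orient c d q' ->
  in_seg p q z -> in_seg p' q' z -> False.
Proof.
move=> p0 q0 p'0 q'0 zpq zpq'.
have := seg_orient_le0 zpq p0 q0; have := seg_orient_gt0 zpq' p'0 q'0; lra.
Qed.

Lemma segments_touch c d p q p' q' z :
  orient c d p = 0 -> 0 < orient c d q ->
  orient c d p' <= 0 -> orient c d q' <= 0 ->
  in_seg p q z -> in_seg p' q' z -> z = p.
Proof.
move=> p0 q0 p'0 q'0 zpq zpq'.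
have zle0 := seg_orient_le0 zpq' p'0 q'0.
have [t [/andP[t0 t1] zt t0p]] := orient_along_seg c d zpq.
by apply: t0p; move: zt; rewrite p0 mulr0 add0r; nra.
Qed.

Lemma separated_path_simple (p : nat -> pt R) (n : nat) :
  (forall i, (i.+2 < n)%N -> exists c d,
     [/\ orient c d (p i.+1) = 0, 0 < orient c d (p i)
       & forall k, (i.+1 < k < n)%N -> orient c d (p k) < 0]) ->
  forall i j, (i < j)%N -> (j.+1 < n)%N ->
    meets_at_endpoints (p i, p i.+1) (p j, p j.+1).
Proof.
move=> sep i j ij jn z /= zi zj.
have [c [d [on_c pos_c neg_c]]] := sep i ltac:(lia).
case: (ltngtP j i.+1) => [|ji|ji]; first lia.
- by case: (segments_separated (c := d) (d := c) _ _ _ _ zi zj);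
    rewrite orient_swap12 ?oppr_le0 ?oppr_gt0 ?on_c ?(ltW pos_c) //; apply: neg_c; lia.
- subst j; have -> : z = p i.+1.
    apply: (segments_touch on_c pos_c _ _ (in_seg_sym zi) zj); first by rewrite on_c.
    by apply: ltW; apply: neg_c; lia.
  by rewrite !inE !eqxx !orbT.
Qed.

Lemma path_crossing_at_vertex c d (p : nat -> pt R) (n i : nat) :
  p i \in [:: c; d] ->
  (forall k, (k < i)%N -> 0 < orient d c (p k)) ->
  (forall k, (i < k < n)%N -> 0 < orient c d (p k)) ->
  forall j, (j.+1 < n)%N -> meets_at_endpoints (c, d) (p j, p j.+1).
Proof.
move=> pi_cd before after j jn z /= zcd zj.
have on_cd : orient c d (p i) = 0 by exact: orient_on_line.
have on_dc : orient d c (p i) = 0 by rewrite orient_swap12 on_cd oppr0.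
have cd0 : orient c d c <= 0 by rewrite orient_on_line ?inE ?eqxx.
have cd1 : orient c d d <= 0 by rewrite orient_on_line ?inE ?eqxx ?orbT.
have dc0 : orient d c c <= 0 by rewrite orient_on_line ?inE ?eqxx ?orbT.
have dc1 : orient d c d <= 0 by rewrite orient_on_line ?inE ?eqxx.
case: (ltngtP j.+1 i) => [j1i|ij1|j1i].
- by case: (segments_separated dc0 dc1 (before _ _) (before _ j1i) zcd zj); lia.
- case: (ltngtP j i) => [|ij|ji]; first lia.
    by case: (segments_separated cd0 cd1 (after _ _) (after _ _) zcd zj); lia.
  subst j; have -> : z = p i by apply: (segments_touch on_cd (after _ _) cd0 cd1 zj zcd); lia.
  by rewrite pi_cd !inE eqxx.
- subst i; have -> : z = p j.+1.
    exact: (segments_touch on_dc (before _ _) dc0 dc1 (in_seg_sym zj) zcd).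
  by rewrite pi_cd !inE eqxx orbT.
Qed.

End Orientation.

Lemma chain_related (T : eqType) (A : seq T) (r : rel T) (n : nat) (f : nat -> T) :
  (forall a b c, a \in A -> b \in A -> c \in A -> r a b -> r b c -> r a c) ->
  (forall i, (i < n)%N -> f i \in A) ->
  (forall i, (i.+1 < n)%N -> r (f i) (f i.+1)) ->
  forall i k, (i < k < n)%N -> r (f i) (f k).
Proof.
move=> r_trans fA r_step i; elim=> [|k IHk] /andP[ik kn]; first by [].
case: (ltngtP i k) kn => [lt_ik|gt_ik|<-] kn; [|lia|exact: r_step].
have ikn : (i < k < n)%N by apply/andP; split; lia.
apply: (r_trans _ (f k)); [apply: fA; lia | apply: fA; lia | apply: fA; lia
                          | exact: IHk | exact: r_step].
Qed.

Section Ladder.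
Variables (R : realFieldType) (n : nat) (x y : nat -> pt R).
Hypothesis y_sees_x_cw : forall j i k, (j < n)%N -> (i < k < n)%N ->
  orient (y j) (x i) (x k) < 0.
Hypothesis x_sees_y_ccw : forall j i k, (j < n)%N -> (i < k < n)%N ->
  0 < orient (x j) (y i) (y k).

(* The line through y_0 and x_(i+1) separates x_i from the later x_k. *)
Lemma x_path_simple i j : (i < j)%N -> (j.+1 < n)%N ->
  meets_at_endpoints (x i, x i.+1) (x j, x j.+1).
Proof.
apply: separated_path_simple => {}i i2n; exists (y 0), (x i.+1); split.
- by rewrite orient_on_line // !inE eqxx orbT.
- by rewrite orient_swap23 oppr_gt0 y_sees_x_cw //; lia.
- by move=> k ikn; rewrite y_sees_x_cw //; lia.
Qed.

(* The line through y_(i+1) and x_0 separates y_i from the later y_k. *)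
Lemma y_path_simple i j : (i < j)%N -> (j.+1 < n)%N ->
  meets_at_endpoints (y i, y i.+1) (y j, y j.+1).
Proof.
apply: separated_path_simple => {}i i2n; exists (y i.+1), (x 0); split.
- by rewrite orient_on_line // !inE eqxx.
- by rewrite orient_cycle x_sees_y_ccw //; lia.
- by move=> k ikn; rewrite orient_cycle orient_swap23 oppr_lt0 x_sees_y_ccw //; lia.
Qed.

(* The line through an edge of the x-path has the whole y-path on one side. *)
Lemma x_edge_y_edge_disjoint i j z : (i.+1 < n)%N -> (j.+1 < n)%N ->
  in_seg (x i) (x i.+1) z -> in_seg (y j) (y j.+1) z -> False.
Proof.
move=> ni nj; apply: (segments_separated (c := x i.+1) (d := x i)).
- by rewrite orient_on_line // !inE eqxx orbT.
- by rewrite orient_on_line // !inE eqxx.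
all: by rewrite orient_swap12 -orient_cycle oppr_gt0 y_sees_x_cw //; lia.
Qed.

Lemma rung_side_after i k : (i < k < n)%N ->
  0 < orient (x i) (y i) (x k) /\ 0 < orient (x i) (y i) (y k).
Proof.
move=> ikn; split; last by apply: x_sees_y_ccw; lia.
by rewrite orient_cycle orient_swap23 oppr_gt0 y_sees_x_cw //; lia.
Qed.

Lemma rung_side_before i k : (k < i < n)%N ->
  0 < orient (y i) (x i) (x k) /\ 0 < orient (y i) (x i) (y k).
Proof.
move=> kin; split; first by rewrite orient_swap23 oppr_gt0 y_sees_x_cw //; lia.
by rewrite orient_cycle x_sees_y_ccw //; lia.
Qed.

(* Distinct rungs lie on opposite sides of each other's lines. *)
Lemma rungs_disjoint i j z : (i < j < n)%N ->
  in_seg (x i) (y i) z -> in_seg (x j) (y j) z -> False.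
Proof.
move=> ijn; apply: segments_separated (rung_side_after ijn).1 (rung_side_after ijn).2.
- by rewrite orient_on_line // !inE eqxx.
- by rewrite orient_on_line // !inE eqxx orbT.
Qed.

(* The x-path crosses the line of rung i at x_i, so it meets the rung only there;
   likewise the y-path at y_i. *)
Lemma rung_x_edge i j : (i < n)%N -> (j.+1 < n)%N ->
  meets_at_endpoints (x i, y i) (x j, x j.+1).
Proof.
move=> ni; apply: (path_crossing_at_vertex (i := i)); first by rewrite !inE eqxx.
- move=> k ki; have kin : (k < i < n)%N by apply/andP; split; lia.
  exact: (rung_side_before kin).1.
- by move=> k ikn; apply: (rung_side_after ikn).1.
Qed.

Lemma rung_y_edge i j : (i < n)%N -> (j.+1 < n)%N ->
  meets_at_endpoints (x i, y i) (y j, y j.+1).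
Proof.
move=> ni; apply: (path_crossing_at_vertex (i := i)); first by rewrite !inE eqxx orbT.
- move=> k ki; have kin : (k < i < n)%N by apply/andP; split; lia.
  exact: (rung_side_before kin).2.
- by move=> k ikn; apply: (rung_side_after ikn).2.
Qed.

Lemma ladder_non_crossing : non_crossing (ladder_edges n x y).
Proof.
move=> e f; rewrite !mem_cat => e_in f_in [e_ne_f _].
case/or3P: e_in e_ne_f => /mapP[i]; rewrite mem_iota add0n => /andP[_ ni] ->;
  case/or3P: f_in => /mapP[j]; rewrite mem_iota add0n => /andP[_ nj] -> /= ne;
  rewrite -/(meets_at_endpoints (_, _) (_, _)).
- case: (ltngtP i j) => [ij|ji|eij]; last by rewrite eij eqxx in ne.
    by apply: x_path_simple; lia.
  by apply: meets_at_endpoints_sym; apply: x_path_simple; lia.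
- by move=> z zi zj; case: (x_edge_y_edge_disjoint _ _ zi zj); lia.
- by apply: meets_at_endpoints_sym; apply: rung_x_edge; lia.
- by move=> z zi zj; case: (x_edge_y_edge_disjoint _ _ zj zi); lia.
- case: (ltngtP i j) => [ij|ji|eij]; last by rewrite eij eqxx in ne.
    by apply: y_path_simple; lia.
  by apply: meets_at_endpoints_sym; apply: y_path_simple; lia.
- by apply: meets_at_endpoints_sym; apply: rung_y_edge; lia.
- by apply: rung_x_edge; lia.
- by apply: rung_y_edge; lia.
- move=> z zi zj; case: (ltngtP i j) => [ij|ji|eij]; last by rewrite eij eqxx in ne.
    by case: (rungs_disjoint _ zi zj); lia.
  by case: (rungs_disjoint _ zj zi); lia.
Qed.

End Ladder.

Unset Implicit Arguments. Set Strict Implicit.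
Theorem mainTheorem9 (R : realFieldType) (A B : seq (pt R))
  (precA precB : pt R -> pt R -> bool) (n : nat) (x y : nat -> pt R) :
  mutually_avoiding A B ->
  general_position (A ++ B) ->
  avoiding_orders A B precA precB ->
  (forall i, (i < n)%N -> x i \in A) ->
  (forall i, (i < n)%N -> y i \in B) ->
  (forall i, (i.+1 < n)%N -> precA (x i) (x i.+1)) ->
  (forall i, (i.+1 < n)%N -> precB (y i) (y i.+1)) ->
  non_crossing (ladder_edges n x y).
Proof.
move=> _ _ [[_ [transA _]] [[_ [transB _]] [B_sees_cw A_sees_ccw]]] xA yB x_step y_step.
apply: ladder_non_crossing => j i k jn ikn.
- apply: B_sees_cw; rewrite ?yB ?xA ?(chain_related transA xA x_step) //; lia.
- apply: A_sees_ccw; rewrite ?xA ?yB ?(chain_related transB yB y_step) //; lia.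
Qed.
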